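(* For every $k\in\mathbb Z$, the $q$-dimension of the charge-$k$ subspace of $\mathcal F^{-1}$ (which is the irreducible $\widehat{\mathfrak{gl}}_\infty$-module of level $-1$ attached to $k$) is $$\mathsf Q^{(k)}_{-1}(q):=\mathrm{tr}_{\mathcal F^{-1}_{(k)}}q^{L_0}=\frac{1}{(q)_\infty^2}\sum_{m\ge0}(-1)^mq^{\frac12m(m+1)+|k|(m+\frac12)}.$$
   Context: Let $\mathcal F^{-1}$ be the bosonic Fock space generated from a vacuum by commuting creation operators $\gamma^+_{-r},\gamma^-_{-r}$, $r\in\frac12+\mathbb Z_{\ge0}$, with basis the monomials $\gamma^+_{-r_1}\cdots\gamma^+_{-r_a}\gamma^-_{-s_1}\cdots\gamma^-_{-s_b}|0\rangle$ ($r_1\ge\cdots\ge r_a>0$, $s_1\ge\cdots\ge s_b>0$ in $\frac12+\mathbb Z$). $L_0$ acts on such a monomial by $\sum r_i+\sum s_j$; $\mathcal F^{-1}_{(k)}$ is the span of monomials with $a-b=k$. $(q)_\infty=\prod_{i\ge1}(1-q^i)$. *)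

(* Formal power series in t := q^(1/2) are handled
   coefficientwise; all q-exponents below are doubled (t-exponents). *)
From HB Require Import structures.
From mathcomp Require Import all_boot all_order all_algebra.
Set Implicit Arguments. Unset Strict Implicit. Unset Printing Implicit Defensive.
Import Order.TTheory GRing.Theory Num.Theory.

(* A basis monomial  g+_{-r_1}...g+_{-r_a} g-_{-s_1}...g-_{-s_b}|0>  of
   doubled weight 2 L_0 = n is encoded by its two multiplicity functions:
   fp i (resp. fm i) = number of occurrences of the mode r = i/2 (i odd)
   among the r's (resp. s's).  Since every doubled mode i is >= 1 and the
   total doubled weight is n, only modes i <= n and multiplicities <= n occur,
   so the ordinals 'I_n.+1 capture all such monomials. *)
Definition fock_monomial (k : int) (n : nat)
  (fp fm : {ffun 'I_n.+1 -> 'I_n.+1}) : bool :=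
  [&& [forall i : 'I_n.+1, ~~ odd i ==> (fp i == 0 :> nat)],
      [forall i : 'I_n.+1, ~~ odd i ==> (fm i == 0 :> nat)],
      (\sum_(i < n.+1) i * fp i + \sum_(i < n.+1) i * fm i == n)%N &
      (Posz (\sum_(i < n.+1) (fp i : nat)) - Posz (\sum_(i < n.+1) (fm i : nat)) == k)%R].

(* Coefficient of t^n = q^(n/2) in tr_{F^{-1}_(k)} q^{L_0}:
   the dimension of the L_0 = n/2 eigenspace of the charge-k subspace. *)
Definition trace_coef (k : int) (n : nat) : nat :=
  #|[set p : {ffun 'I_n.+1 -> 'I_n.+1} * {ffun 'I_n.+1 -> 'I_n.+1}
       | fock_monomial k p.1 p.2]|.

(* Truncation (exact up to t-degree n) of
   1/(q)_oo^2 = prod_{i>=1} (sum_{j>=0} q^(i j))^2, with q = t^2. *)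
Definition inv_poch2_trunc (n : nat) : {poly int} :=
  (\prod_(1 <= i < n.+1) (\sum_(j < n.+1) 'X^(2 * i * j)) ^+ 2)%R.

(* Truncation (exact up to t-degree n) of
   sum_{m>=0} (-1)^m q^(m(m+1)/2 + |k|(m+1/2)), with q = t^2. *)
Definition theta_trunc (k : int) (n : nat) : {poly int} :=
  (\sum_(m < n.+1) (-1) ^+ m *: 'X^(m * m.+1 + `|k|%N * (2 * m).+1))%R.

(* Everything is computed in the variable t = q^(1/2) and modulo t^N, N = n + 1,
   where the theorem compares the coefficients of t^n.

   Working with polynomials modulo t^N ([agree]), we prove
      Euler's two identities 1/(q^c;q)_oo = sum_b q^(c b)/(q;q)_b and
      (q^c;q)_oo = sum_j (-1)^j q^(j(j-1)/2 + c j)/(q;q)_j by descending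
      induction on c, and derive from them the key identity
        (q;q)_oo^2 sum_b q^(b + K/2) / ((q;q)_(b+K) (q;q)_b) = theta_K(q).
   2. Partitions into odd parts.  The generating function
      H(z) = prod_(r odd) 1/(1 - z t^r) satisfies H(z) (1 - z t) = H(q z),
      whence its z^a coefficient is h_a = t^a/(q;q)_a.
   3. Counting.  A basis monomial of F^{-1} is a pair of partitions into odd
      parts (the doubled modes of the two kinds of creation operators), so the
      charge-k trace is sum_(a - b = k) h_a h_b = sum_b h_(b+K) h_b, K = |k|;
      by part 2 this is the series of part 1, which gives the theorem. *)
From HB Require Import structures.
From mathcomp Require Import all_boot all_order all_algebra.
From mathcomp Require Import zify ring.
Set Implicit Arguments. Unset Strict Implicit. Unset Printing Implicit Defensive.
Import Order.TTheory GRing.Theory Num.Theory.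
Local Open Scope ring_scope.

Section Agreement.
Variables (R : nzRingType) (N : nat).

(* Identities of formal power series are proved for their
   truncations up to this relation, which is a congruence for + and *. *)
Definition agree (p q : {poly R}) := forall i, (i < N)%N -> p`_i = q`_i.

Lemma agree_refl p : agree p p.
Proof. by []. Qed.

Lemma agree_sym p q : agree p q -> agree q p.
Proof. by move=> hpq i hi; rewrite hpq. Qed.

Lemma agree_trans p q r : agree p q -> agree q r -> agree p r.
Proof. by move=> hpq hqr i hi; rewrite hpq ?hqr. Qed.

Lemma agreeD p1 p2 q1 q2 : agree p1 p2 -> agree q1 q2 -> agree (p1 + q1) (p2 + q2).
Proof. by move=> hp hq i hi; rewrite !coefD hp ?hq. Qed.

Lemma agreeN p1 p2 : agree p1 p2 -> agree (- p1) (- p2).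
Proof. by move=> hp i hi; rewrite !coefN hp. Qed.

(* Coefficients of a product below degree N only involve coefficients of the
   factors below degree N. *)
Lemma agreeM p1 p2 q1 q2 : agree p1 p2 -> agree q1 q2 -> agree (p1 * q1) (p2 * q2).
Proof.
move=> hp hq i hi; rewrite !coefM; apply: eq_bigr => j _.
have hj : (j <= i)%N by rewrite -ltnS.
by rewrite hp ?hq //; [exact: leq_ltn_trans (leq_subr _ _) hi | exact: leq_ltn_trans hj hi].
Qed.

Lemma agreeMl p q r : agree q r -> agree (p * q) (p * r).
Proof. by move/(agreeM (agree_refl p)). Qed.

Lemma agreeMr p q r : agree q r -> agree (q * p) (r * p).
Proof. by move/agreeM; apply. Qed.

Lemma agree_sum (I : Type) (r : seq I) (P : pred I) (F G : I -> {poly R}) :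
  (forall i, P i -> agree (F i) (G i)) ->
  agree (\sum_(i <- r | P i) F i) (\sum_(i <- r | P i) G i).
Proof.
move=> hFG; elim/big_rec2: _ => [|i x y Pi hxy]; first exact: agree_refl.
by apply: agreeD => //; apply: hFG.
Qed.

Lemma agree_sum0 (I : Type) (r : seq I) (P : pred I) (F : I -> {poly R}) :
  (forall i, P i -> agree (F i) 0) -> agree (\sum_(i <- r | P i) F i) 0.
Proof.
move=> hF; rewrite [X in agree _ X](_ : _ = \sum_(i <- r | P i) 0); last by rewrite big1.
exact: agree_sum.
Qed.

Lemma agree_addr p q : agree q 0 -> agree (p + q) p.
Proof. by move=> hq; rewrite -[X in agree _ X]addr0; apply: agreeD. Qed.

Lemma agree_XnM m p : (N <= m)%N -> agree ('X^m * p) 0.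
Proof. by move=> hm i hi; rewrite coefXnM coef0 (leq_trans hi hm). Qed.

Lemma agree_Xn m : (N <= m)%N -> agree 'X^m 0.
Proof. by move=> hm; rewrite -[X in agree X _]mulr1; apply: agree_XnM. Qed.

Lemma agree_1subXn m : (N <= m)%N -> agree (1 - 'X^m) 1.
Proof. by move=> hm; apply: agree_addr; rewrite -oppr0; apply/agreeN/agree_Xn. Qed.

Lemma agree_sub_swap p q r : agree (p - q) r -> agree (p - r) q.
Proof. by move=> h i hi; move: (h i hi); rewrite !coefB => <-; rewrite opprB addrC subrK. Qed.

End Agreement.

Lemma desc_ind (N : nat) (P : nat -> Prop) :
  (forall c, (N <= c)%N -> P c) -> (forall c, (c < N)%N -> P c.+1 -> P c) ->
  forall c, P c.
Proof.
move=> base step c; have [m] := ubnP (N - c); elim: m c => // m IH c hm.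
have [hNc | hcN] := leqP N c; first exact: base.
by apply: step => //; apply: IH; rewrite subnS prednK ?subn_gt0 // -ltnS.
Qed.

Section QSeries.
Variables (R : comNzRingType) (n : nat).
Local Notation N := n.+1.
Local Notation agree := (agree N).

(* All series are in t with q = t^2 and truncated at t-degree N.
   [geom i] is the truncation of 1/(1 - q^i) = sum_j q^(i j). *)
Definition geom (i : nat) : {poly R} := \sum_(j < N) 'X^(2 * i * j).

(* [inv_qfac a] is the truncation of 1/(q;q)_a = prod_(1 <= i <= a) 1/(1 - q^i). *)
Definition inv_qfac (a : nat) : {poly R} := \prod_(1 <= i < a.+1) geom i.

(* [qpoch c d] is the finite q-Pochhammer product prod_(c <= i < d) (1 - q^i);
   [qpoch c N] stands for (q^c;q)_oo, whose omitted factors are 1 mod t^N. *)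
Definition qpoch (c d : nat) : {poly R} := \prod_(c <= i < d) (1 - 'X^(2 * i)).

Lemma geom_inv i : (0 < i)%N -> agree ((1 - 'X^(2 * i)) * geom i) 1.
Proof.
move=> hi; rewrite /geom (eq_bigr (fun j : 'I_N => 'X^(2 * i) ^+ j)); last first.
  by move=> j _; rewrite exprM.
rewrite -opprB mulNr -subrX1 opprB -exprM; apply: agree_1subXn.
by rewrite leq_pmull // muln_gt0 hi.
Qed.

Lemma inv_qfac_step a : agree ((1 - 'X^(2 * a.+1)) * inv_qfac a.+1) (inv_qfac a).
Proof.
rewrite /inv_qfac big_nat_recr //= mulrCA -[X in agree _ X]mulr1.
by apply: agreeMl; apply: geom_inv.
Qed.

Lemma qpoch_inv_qfac a : agree (qpoch 1 a.+1 * inv_qfac a) 1.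
Proof.
elim: a => [|a IH]; first by rewrite /qpoch /inv_qfac !big_geq // mulr1.
rewrite /qpoch big_nat_recr //= -/(qpoch 1 a.+1) -mulrA.
exact: agree_trans (agreeMl _ (inv_qfac_step a)) IH.
Qed.

Lemma qpoch_split a b c : (a <= b)%N -> (b <= c)%N -> qpoch a c = qpoch a b * qpoch b c.
Proof. by move=> hab hbc; rewrite /qpoch (big_cat_nat hab hbc). Qed.

Lemma qpoch_high a b : (N <= a)%N -> agree (qpoch a b) 1.
Proof.
move=> ha; rewrite /qpoch big_seq_cond.
elim/big_rec: _ => [|i x /andP [+ _] hx]; first exact: agree_refl.
rewrite mem_index_iota => /andP [hi _].
rewrite -[X in agree _ X]mul1r; apply: agreeM => //; apply: agree_1subXn.
by rewrite (leq_trans (leq_trans ha hi)) // leq_pmull.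
Qed.

Lemma qpoch_tail a : agree (qpoch 1 N * inv_qfac a) (qpoch a.+1 N).
Proof.
have [haN | hNa] := ltnP a N.
  rewrite (@qpoch_split 1 a.+1 N) // mulrAC -[X in agree _ X]mul1r.
  by apply: agreeMr; apply: qpoch_inv_qfac.
rewrite [qpoch a.+1 N]/qpoch big_geq ?leqW //.
apply: (agree_trans _ (qpoch_inv_qfac a)).
rewrite (@qpoch_split 1 N a.+1) ?(leqW hNa) // -mulrA; apply: agreeMl.
rewrite -[X in agree X _]mul1r; apply: agreeMr.
by apply: agree_sym; apply: qpoch_high.
Qed.

Definition euler_exp (c : nat) : {poly R} :=
  \sum_(0 <= b < N) 'X^(2 * c * b) * inv_qfac b.

Lemma euler_exp_diff c : (0 < c)%N ->
  agree (euler_exp c - euler_exp c.+1) ('X^(2 * c) * euler_exp c).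
Proof.
move=> hc.
have -> : euler_exp c - euler_exp c.+1 =
    \sum_(0 <= b < N) 'X^(2 * c * b) * ((1 - 'X^(2 * b)) * inv_qfac b).
  rewrite /euler_exp -sumrB; apply: eq_bigr => b _.
  by rewrite mulrBl mul1r mulrBr mulrA -exprD mulnSr mulnDl.
rewrite big_nat_recl // muln0 expr0 subrr mul0r mulr0 add0r.
rewrite /euler_exp mulr_sumr big_nat_recr //=.
apply: agree_trans (agree_sym (agree_addr _ _)); last first.
  by rewrite mulrA -exprD; apply: agree_XnM; rewrite -mulnS leq_pmull // muln_gt0 hc.
apply: agree_sum => b _.
by rewrite mulrA -exprD -mulnS; apply/agreeMl/inv_qfac_step.
Qed.

Lemma euler_exp_high c : (N <= c)%N -> agree (euler_exp c) 1.
Proof.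
move=> hc; rewrite /euler_exp big_nat_recl // muln0 expr0 mul1r /inv_qfac big_geq //.
by apply/agree_addr/agree_sum0 => b _; apply: agree_XnM; nia.
Qed.

Lemma qpoch_euler_exp c : (0 < c)%N -> agree (qpoch c N * euler_exp c) 1.
Proof.
elim/(@desc_ind N): c => [c hNc _ | c hcN IH hc].
  by rewrite /qpoch big_geq // mul1r; apply: euler_exp_high.
rewrite /qpoch big_ltn // -/(qpoch c.+1 N) mulrAC mulrC.
apply: agree_trans (agreeMl _ _) (IH isT).
by rewrite mulrBl mul1r; apply/agree_sub_swap/euler_exp_diff.
Qed.

Definition euler_sum (c : nat) : {poly R} :=
  \sum_(0 <= j < N) (-1) ^+ j * 'X^(j * j.-1 + 2 * c * j) * inv_qfac j.

Lemma euler_sum_diff c : (0 < c)%N ->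
  agree (euler_sum c - euler_sum c.+1) (- ('X^(2 * c) * euler_sum c.+1)).
Proof.
move=> hc.
have -> : euler_sum c - euler_sum c.+1 = \sum_(0 <= j < N)
     (-1) ^+ j * 'X^(j * j.-1 + 2 * c * j) * ((1 - 'X^(2 * j)) * inv_qfac j).
  rewrite /euler_sum -sumrB; apply: eq_bigr => j _.
  have -> : (j * j.-1 + 2 * c.+1 * j = j * j.-1 + 2 * c * j + 2 * j)%N by lia.
  by rewrite !exprD mulrBl mul1r mulrBr !mulrA.
rewrite big_nat_recl // !muln0 expr0 subrr mul0r mulr0 add0r.
rewrite /euler_sum mulr_sumr big_nat_recr //= opprD.
apply: agree_trans (agree_sym (agree_addr _ _)); last first.
  rewrite -oppr0; apply: agreeN.
  rewrite -mulrA mulrCA (mulrA 'X^_) -exprD mulrCA; apply: agree_XnM; nia.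
rewrite -sumrN; apply: agree_sum => j _.
have -> : (j.+1 * j.+1.-1 + 2 * c * j.+1 = 2 * c + (j * j.-1 + 2 * c.+1 * j))%N.
  by case: j => [|j] /=; nia.
have regroup (s u v w : {poly R}) : -1 * s * (u * v) * w = - (u * (s * v * w)) by ring.
rewrite exprS exprD regroup; apply/agreeN/agreeMl/agreeMl/inv_qfac_step.
Qed.

Lemma euler_sum_high c : (N <= c)%N -> agree (euler_sum c) 1.
Proof.
move=> hc; rewrite /euler_sum big_nat_recl // !muln0 expr0 !mul1r /inv_qfac big_geq //.
by apply/agree_addr/agree_sum0 => j _; rewrite mulrAC mulrC; apply: agree_XnM; nia.
Qed.

Lemma qpoch_euler_sum c : (0 < c)%N -> agree (qpoch c N) (euler_sum c).
Proof.
elim/(@desc_ind N): c => [c hNc _ | c hcN IH hc].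
  by rewrite /qpoch big_geq //; apply/agree_sym/euler_sum_high.
rewrite /qpoch big_ltn // -/(qpoch c.+1 N).
apply: agree_trans (agreeMl _ (IH isT)) _.
rewrite mulrBl mul1r -[euler_sum c](subrK (euler_sum c.+1)) addrC.
by apply: agreeD; [apply/agree_sym/euler_sum_diff | apply: agree_refl].
Qed.

Definition charge_series (K : nat) : {poly R} :=
  \sum_(0 <= b < N) 'X^(2 * b + K) * inv_qfac (b + K) * inv_qfac b.

Definition theta (K : nat) : {poly R} :=
  \sum_(0 <= m < N) (-1) ^+ m * 'X^(m * m.+1 + K * (2 * m).+1).

Lemma monomial_regroup (s A B C : {poly R}) e1 e2 e3 e4 : (e1 + e2 = e3 + e4)%N ->
  'X^e1 * (s * 'X^e2 * A) * (B * C) = s * 'X^e3 * (B * A) * ('X^e4 * C).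
Proof.
move=> he; have hX : 'X^e1 * 'X^e2 = 'X^e3 * 'X^e4 :> {poly R} by rewrite -!exprD he.
by transitivity (s * ('X^e1 * 'X^e2) * A * B * C); [ring | rewrite hX; ring].
Qed.

Lemma charge_series_exchange K :
  \sum_(0 <= b < N) 'X^(2 * b + K) * euler_sum (b + K).+1 * (qpoch 1 N * inv_qfac b) =
  \sum_(0 <= j < N) (-1) ^+ j * 'X^(j * j.+1 + K * (2 * j).+1) *
                      (qpoch 1 N * inv_qfac j) * euler_exp j.+1.
Proof.
under eq_bigr do rewrite /euler_sum mulr_sumr mulr_suml.
rewrite exchange_big_nat; apply: eq_bigr => j _.
rewrite /euler_exp mulr_sumr; apply: eq_bigr => b _.
by apply: monomial_regroup; case: j => [|j] /=; nia.
Qed.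

Lemma charge_series_theta K : agree (qpoch 1 N ^+ 2 * charge_series K) (theta K).
Proof.
set P := qpoch 1 N.
have -> : P ^+ 2 * charge_series K =
    \sum_(0 <= b < N) 'X^(2 * b + K) * (P * inv_qfac (b + K)) * (P * inv_qfac b).
  by rewrite /charge_series mulr_sumr; apply: eq_bigr => b _; ring.
apply: agree_trans (agree_sum _ _) _ => [b _ | ].
  apply/agreeMr/agreeMl; apply: agree_trans (qpoch_tail _) _.
  exact: qpoch_euler_sum.
rewrite charge_series_exchange /theta big_seq [X in agree _ X]big_seq.
apply: agree_sum => j; rewrite mem_index_iota => /andP [_ hj].
rewrite -mulrA -[X in agree _ X]mulr1; apply: agreeMl.
rewrite /P (@qpoch_split 1 j.+1 N) // -[X in agree _ X](mulr1 1).
have -> : qpoch 1 j.+1 * qpoch j.+1 N * inv_qfac j * euler_exp j.+1 =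
          qpoch 1 j.+1 * inv_qfac j * (qpoch j.+1 N * euler_exp j.+1) by ring.
by apply: agreeM; [apply: qpoch_inv_qfac | apply: qpoch_euler_exp].
Qed.

End QSeries.

Section OddPartitions.
Variables (R : comNzRingType) (n : nat).
Local Notation N := n.+1.
Local Notation agree := (agree N).

(* Bivariate series are polynomials in z with coefficients in R[t]; they are
   compared coefficientwise in z, each coefficient modulo t^N. *)
Definition agree2 (P Q : {poly {poly R}}) := forall a, agree P`_a Q`_a.

Lemma agree2_refl P : agree2 P P.
Proof. by move=> a; apply: agree_refl. Qed.

Lemma agree2_sym P Q : agree2 P Q -> agree2 Q P.
Proof. by move=> hPQ a; apply: agree_sym. Qed.

Lemma agree2_trans P Q S : agree2 P Q -> agree2 Q S -> agree2 P S.
Proof. by move=> hPQ hQS a; apply: agree_trans (hPQ a) (hQS a). Qed.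

Lemma agree2M P1 P2 Q1 Q2 : agree2 P1 P2 -> agree2 Q1 Q2 -> agree2 (P1 * Q1) (P2 * Q2).
Proof. by move=> hP hQ a; rewrite !coefM; apply: agree_sum => j _; apply: agreeM. Qed.

(* The substitution z |-> q z, i.e. multiplication of the z^a coefficient by
   q^a = t^(2a); it is multiplicative. *)
Definition zscale (P : {poly {poly R}}) : {poly {poly R}} :=
  \poly_(a < size P) ('X^(2 * a) * P`_a).

Lemma coef_zscale P a : (zscale P)`_a = 'X^(2 * a) * P`_a.
Proof. by rewrite coef_poly; case: ltnP => // ha; rewrite nth_default // mulr0. Qed.

Lemma zscaleM P Q : zscale (P * Q) = zscale P * zscale Q.
Proof.
apply/polyP => a; rewrite coef_zscale !coefM mulr_sumr; apply: eq_bigr => j _.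
rewrite !coef_zscale mulrACA -exprD -mulnDr subnKC //.
by rewrite -ltnS.
Qed.

Lemma zscale1 : zscale 1 = 1.
Proof. by apply/polyP => -[|a]; rewrite coef_zscale coefC ?mulr1 ?mulr0. Qed.

(* Coefficient of z^j t^(i j) in the factor of mode t^i: j copies of the
   creation mode of doubled weight i, allowed only for odd i. *)
Definition mode_coef (i j : nat) : {poly R} :=
  if odd i || (j == 0)%N then 'X^(i * j) else 0.

Definition mode_factor (i : nat) : {poly {poly R}} := \poly_(j < N) mode_coef i j.

(* The generating function prod_(i odd) 1/(1 - z t^i) of partitions into odd
   parts, z counting the parts and t their sum. *)
Definition odd_gen : {poly {poly R}} := \prod_(i < N) mode_factor i.

Definition odd_parts (a : nat) : {poly R} := odd_gen`_a.

Lemma mode_factor0 : mode_factor 0 = 1.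
Proof. by apply/polyP => -[|a]; rewrite coef_poly coefC /mode_coef //=; case: ifP. Qed.

Lemma mode_factor_high i : (N <= i)%N -> agree2 (mode_factor i) 1.
Proof.
move=> hi [|a]; rewrite coef_poly coefC /mode_coef /=.
  by rewrite orbT muln0 expr0; apply: agree_refl.
case: ifP => _; last exact: agree_refl.
case: ifP => _; last exact: agree_refl.
by apply: agree_Xn; rewrite (leq_trans hi) // leq_pmulr.
Qed.

Definition zt : {poly {poly R}} := ('X : {poly R})%:P * 'X.

Lemma mode_factor1 : agree2 (mode_factor 1 * (1 - zt)) 1.
Proof.
move=> a; rewrite mulrBr mulr1 coefB /zt mulrA coefMX coefMC !coef_poly coefC /mode_coef /=.
case: a => [|a] /=; first by rewrite expr0 subr0; apply: agree_refl.
rewrite mul1n; have [ha | ha] := ltnP a.+1 N.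
  by rewrite (ltnW ha) mul1n -exprSr subrr; apply: agree_refl.
case: ifP => _; last by rewrite sub0r mul0r oppr0; apply: agree_refl.
by rewrite sub0r mul1n -exprSr -oppr0; apply/agreeN/agree_Xn.
Qed.

Lemma zscale_mode_factor i : zscale (mode_factor i) = mode_factor i.+2.
Proof.
apply/polyP => a; rewrite coef_zscale !coef_poly; case: ifP => _; last by rewrite mulr0.
rewrite /mode_coef /= negbK; case: (odd i || _); last by rewrite mulr0.
by rewrite -exprD; congr 'X^_; lia.
Qed.

(* The functional equation  H(z) (1 - z t) = H(q z)  of the odd-part generating
   function H: shifting all modes by 2 loses exactly the mode t^1. *)
Lemma odd_gen_shift : agree2 (odd_gen * (1 - zt)) (zscale odd_gen).
Proof.
have ext : agree2 odd_gen (\prod_(i < N.+2) mode_factor i).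
  rewrite 2!big_ord_recr /= -/odd_gen -[X in agree2 X _]mulr1 -mulrA.
  apply: agree2M; first exact: agree2_refl.
  by rewrite -[X in agree2 X _](mulr1 1); apply: agree2M; apply/agree2_sym/mode_factor_high.
rewrite /odd_gen (big_morph zscale zscaleM zscale1).
under eq_bigr do rewrite zscale_mode_factor.
apply: agree2_trans (agree2M ext (agree2_refl (1 - zt))) _.
rewrite 2!big_ord_recl /= mode_factor0 mul1r mulrAC -[X in agree2 _ X]mul1r.
by apply: agree2M; [apply: mode_factor1 | apply: agree2_refl].
Qed.

Lemma odd_parts_rec a :
  agree (odd_parts a.+1 - odd_parts a * 'X) ('X^(2 * a.+1) * odd_parts a.+1).
Proof.
by have := odd_gen_shift a.+1; rewrite coef_zscale mulrBr mulr1 coefB /zt mulrA coefMX coefMC.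
Qed.

Lemma odd_parts0 : odd_parts 0 = 1.
Proof.
rewrite /odd_parts /odd_gen coef0_prod; apply: big1 => i _.
by rewrite coef_poly /= /mode_coef orbT muln0 expr0.
Qed.

Lemma qpoch_odd_parts a : agree (qpoch R 1 a.+1 * odd_parts a) 'X^a.
Proof.
elim: a => [|a IH]; first by rewrite /qpoch big_geq // odd_parts0 mulr1; apply: agree_refl.
rewrite /qpoch big_nat_recr //= -/(qpoch R 1 a.+1) -mulrA.
have step : agree ((1 - 'X^(2 * a.+1)) * odd_parts a.+1) (odd_parts a * 'X).
  by rewrite mulrBl mul1r; apply/agree_sub_swap/odd_parts_rec.
by apply: agree_trans (agreeMl _ step) _; rewrite mulrA exprSr; apply: agreeMr.
Qed.

Lemma odd_parts_approx a : agree (odd_parts a) ('X^a * inv_qfac R n a).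
Proof.
apply: (agree_trans (q := qpoch R 1 a.+1 * inv_qfac R n a * odd_parts a)).
  by rewrite -[X in agree X _]mul1r; apply/agreeMr/agree_sym/qpoch_inv_qfac.
by rewrite mulrAC; apply/agreeMr/qpoch_odd_parts.
Qed.

End OddPartitions.

Section FockMonomials.
Variable n : nat.
Local Notation N := n.+1.
Local Notation M := (N * N)%N.

Local Notation mult := {ffun 'I_N -> 'I_N}.

Definition odd_support (f : mult) : bool :=
  [forall i : 'I_N, ~~ odd i ==> (f i == 0 :> nat)].

Definition parts (f : mult) : nat := \sum_(i < N) (f i : nat).
Definition weight (f : mult) : nat := \sum_(i < N) i * f i.

Lemma fock_monomialE k (f g : mult) : fock_monomial k f g =
  [&& odd_support f, odd_support g, (weight f + weight g == n)%N &
      Posz (parts f) - Posz (parts g) == k].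
Proof. by []. Qed.

Lemma prod_mode_coef (R : comNzRingType) (f : mult) :
  \prod_(i < N) mode_coef R i (f i) = if odd_support f then 'X^(weight f) else 0.
Proof.
case: ifP => hodd.
  rewrite /weight -prodrXr; apply: eq_bigr => i _; rewrite /mode_coef.
  by move/forallP/(_ i): hodd; case: (odd i) => //= /eqP ->.
move/negbT: hodd; rewrite negb_forall => /existsP [i].
rewrite negb_imply => /andP [hi hf].
by rewrite (bigD1 i) //= /mode_coef (negbTE hi) (negbTE hf) mul0r.
Qed.

Lemma odd_gen_expand (R : comNzRingType) : odd_gen R n =
  \sum_(f : mult) (if odd_support f then 'X^(weight f) else 0) *: 'X^(parts f).
Proof.
rewrite /odd_gen (eq_bigr (fun i : 'I_N => \sum_(j : 'I_N) mode_coef R i j *: 'X^j));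
  last by move=> i _; rewrite /mode_factor poly_def.
rewrite bigA_distr_bigA /=; apply: eq_bigr => f _.
rewrite -prod_mode_coef -mul_polyC rmorph_prod -prodrXr -big_split /=.
by apply: eq_bigr => i _; rewrite mul_polyC.
Qed.

Lemma odd_parts_expand (R : comNzRingType) a : odd_parts R n a =
  \sum_(f : mult | parts f == a) (if odd_support f then 'X^(weight f) else 0).
Proof.
rewrite /odd_parts odd_gen_expand coef_sum [RHS]big_mkcond /=; apply: eq_bigr => f _.
by rewrite coefZ coefXn eq_sym; case: (parts f == a); rewrite ?mulr1 ?mulr0.
Qed.

Lemma coef_odd_parts_mul a b : (odd_parts int n a * odd_parts int n b)`_n =
  \sum_(f : mult | parts f == a) \sum_(g : mult | parts g == b)
     (if [&& odd_support f, odd_support g & weight f + weight g == n]%N then 1 else 0).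
Proof.
rewrite !odd_parts_expand mulr_suml coef_sum; apply: eq_bigr => f _.
rewrite mulr_sumr coef_sum; apply: eq_bigr => g _.
case: (odd_support f); case: (odd_support g); rewrite ?mulr0 ?mul0r ?coef0 //=.
by rewrite -exprD coefXn eq_sym; case: (_ == _).
Qed.

Lemma parts_lt (f : mult) : (parts f < M)%N.
Proof.
have : (parts f <= \sum_(i < N) n)%N by apply: leq_sum => i _; rewrite -ltnS.
by rewrite sum_nat_const card_ord => /leq_ltn_trans; apply; rewrite ltn_pmul2l.
Qed.

Lemma sum_by_parts (F : mult -> int) :
  \sum_(f : mult) F f = \sum_(a < M) \sum_(f : mult | parts f == a) F f.
Proof. by rewrite (partition_big (fun f => Ordinal (parts_lt f)) xpredT). Qed.

Lemma trace_coef_parts k : Posz (trace_coef k n) =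
  \sum_(a < M) \sum_(b < M)
    (if Posz a - Posz b == k then (odd_parts int n a * odd_parts int n b)`_n else 0).
Proof.
rewrite /trace_coef -sum1_card (big_morph Posz PoszD (erefl _)) big_mkcond /=.
rewrite (eq_bigr (fun p => if fock_monomial k p.1 p.2 then Posz 1 else 0));
  last by move=> p _; rewrite inE.
have -> : \sum_(p : mult * mult) (if fock_monomial k p.1 p.2 then Posz 1 else 0) =
          \sum_(f : mult) \sum_(g : mult) (if fock_monomial k f g then Posz 1 else 0).
  by rewrite pair_bigA.
rewrite sum_by_parts; apply: eq_bigr => a _.
rewrite (eq_bigr (fun f => \sum_(b < M) \sum_(g : mult | parts g == b)
                   (if fock_monomial k f g then Posz 1 else 0)));
  last by move=> f _; apply: sum_by_parts.
rewrite exchange_big /=; apply: eq_bigr => b _.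
case: ifP => hk; last first.
  rewrite big1 // => f /eqP hf; rewrite big1 // => g /eqP hg.
  by rewrite fock_monomialE hf hg hk !andbF.
rewrite coef_odd_parts_mul; apply: eq_bigr => f /eqP hf; apply: eq_bigr => g /eqP hg.
by rewrite fock_monomialE hf hg hk andbT; case: [&& _, _ & _].
Qed.

End FockMonomials.

Lemma sum_diagonal (N M K : nat) (F : nat -> nat -> int) : (N <= M)%N ->
  (forall a b, (N <= a + b)%N -> F a b = 0) ->
  \sum_(b < M) \sum_(a < M) (if a == (b + K)%N :> nat then F a b else 0) =
  \sum_(b < N) F (b + K)%N b.
Proof.
move=> hNM hF.
have vanish b : (N <= b)%N -> F (b + K)%N b = 0.
  by move=> hb; apply: hF; rewrite (leq_trans hb) // leq_addl.
transitivity (\sum_(b < M) F (b + K)%N b).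
  apply: eq_bigr => b _; rewrite -big_mkcond (big_ord1_eq _ (F^~ b)); case: ltnP => // hbK.
  by rewrite hF // (leq_trans hNM) // (leq_trans hbK) // leq_addr.
rewrite -!(big_mkord xpredT (fun b => F (b + K)%N b)) (big_cat_nat (leq0n N) hNM) /=.
rewrite [X in _ + X]big1_seq ?addr0 // => b; rewrite mem_index_iota => /andP [_ /andP [hb _]].
exact: vanish.
Qed.

Section ChargeSum.
Variable n : nat.
Local Notation N := n.+1.
Local Notation M := (N * N)%N.

Local Notation pair_coef a b := ((odd_parts int n a * odd_parts int n b)`_n).

Lemma pair_coefE a b :
  pair_coef a b = ('X^(a + b) * (inv_qfac int n a * inv_qfac int n b))`_n.
Proof.
by rewrite (agreeM (odd_parts_approx int a) (odd_parts_approx int b) (ltnSn n)) mulrACA -exprD.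
Qed.

Lemma pair_coef_high a b : (N <= a + b)%N -> pair_coef a b = 0.
Proof. by move=> hab; rewrite pair_coefE (agree_XnM _ hab) ?coef0. Qed.

(* Only pairs (a, b) with a - b = k contribute; with K = |k| they are
   (b + K, b), up to the symmetry of a and b. *)
Lemma charge_sum (k : int) :
  \sum_(a < M) \sum_(b < M) (if Posz a - Posz b == k then pair_coef a b else 0) =
  \sum_(b < N) pair_coef (b + `|k|)%N b.
Proof.
have hNM : (N <= M)%N by rewrite leq_pmull.
case: k => K.
  rewrite exchange_big /= -(sum_diagonal K hNM pair_coef_high).
  apply: eq_bigr => b _; apply: eq_bigr => a _.
  by rewrite subr_eq -PoszD eqz_nat addnC.
have high_sym a b : (N <= a + b)%N -> pair_coef b a = 0.
  by move=> hab; rewrite pair_coef_high // addnC.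
rewrite [LHS](_ : _ = \sum_(a < M) \sum_(b < M)
                    (if b == (a + K.+1)%N :> nat then pair_coef a b else 0)); last first.
  apply: eq_bigr => a _; apply: eq_bigr => b _.
  by rewrite NegzE subr_eq addrC -subr_eq opprK -PoszD eqz_nat eq_sym.
rewrite (sum_diagonal K.+1 hNM high_sym).
by apply: eq_bigr => b _; rewrite mulrC.
Qed.

Lemma charge_series_coef K :
  (charge_series int n K)`_n = \sum_(b < N) pair_coef (b + K)%N b.
Proof.
rewrite /charge_series coef_sum big_mkord; apply: eq_bigr => b _.
by rewrite pair_coefE mulrA addnAC addnn -mul2n.
Qed.

End ChargeSum.

Theorem proposition2p10 (k : int) (n : nat) :
  (Posz (trace_coef k n) = (inv_poch2_trunc n * theta_trunc k n)`_n)%R.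
Proof.
rewrite trace_coef_parts charge_sum -charge_series_coef.
have -> : inv_poch2_trunc n = inv_qfac int n n ^+ 2 by rewrite /inv_poch2_trunc prodrXl.
have -> : theta_trunc k n = theta int n `|k|%N.
  rewrite /theta_trunc /theta big_mkord; apply: eq_bigr => m _.
  by rewrite -mul_polyC rmorphXn rmorphN1.
set G := inv_qfac int n n; set P := qpoch int 1 n.+1; set K := `|k|%N.
have GP : agree n.+1 (G ^+ 2 * P ^+ 2) 1.
  rewrite -exprMn mulrC expr2 -[X in agree _ _ X](mulr1 1).
  by apply: agreeM; apply: qpoch_inv_qfac.
have series_theta : agree n.+1 (charge_series int n K) (G ^+ 2 * theta int n K).
  apply: (agree_trans (q := G ^+ 2 * P ^+ 2 * charge_series int n K)).
    by rewrite -[X in agree _ X _]mul1r; apply/agreeMr/agree_sym.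
  by rewrite -mulrA; apply/agreeMl/charge_series_theta.
exact: series_theta (ltnSn n).
Qed.
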